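(* Let $I=\langle Q,D,\tau_{in},\tau_{out}\rangle$ be an instance of DTP where $Q$ is nonrecursive, connected, and contains no rigid atoms. Let $a$ be the maximum radius of a rule of $\Pi_Q$, and let $\mathbf T$ be the set consisting of $\tau_{out}$ and all time points occurring in $\Pi_Q$. Let $U$ be a $\tau_{in}$-update involving only objects in $C_I$, let $P$ be a predicate of $\Pi_Q$, $\vec o$ a tuple of objects and $\tau$ a time point such that $\Pi_Q\cup D\cup U\models P(\vec o,\tau)$ and $|\tau-\tau'|\le a\cdot(\mathrm{rank}(\Pi_Q)-\mathrm{rank}(P))$ for some $\tau'\in\mathbf T$. Then $\Pi_Q\cup D\cup B_I\models P(\vec o,\tau)$, where $B_I$ is the bounded critical update of $I$.
   Context: Temporal Datalog. Constants are partitioned into objects and integer time points; variables into object variables and time variables. A time term is a time point, a time variable, or an expression $t+k$ with $t$ a time variable and $k\in\mathbb{Z}$. Each predicate is either extensional (EDB) or intensional (IDB) and has an arity $n\ge0$, each position being of object sort or time sort; a predicate is rigid if all its positions are of object sort, and temporal if its last position is of time sort and all others are of object sort. An atom $P(t_1,\dots,t_n)$ has terms of the required sorts. A rule is $\bigwedge_i\alpha_i\to\alpha$ with $\alpha$ and all $\alpha_i$ rigid or temporal atoms, $\alpha$ IDB whenever the body is nonempty, and every head variable occurring in the body. A program is a finite set of rules. A fact is a ground rigid or temporal atom without $+$ (identified with the rule $\top\to\alpha$); a dataset is a finite set of EDB facts. Rules are read as universally quantified first-order sentences with $+$ interpreted as integer addition; $\Pi\models\alpha$ denotes entailment. A query is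 $Q=\langle P_Q,\Pi_Q\rangle$ with $\Pi_Q$ a program and $P_Q$ an IDB predicate of $\Pi_Q$; it is temporal if $P_Q$ is temporal. For a temporal query $Q$, dataset $D$ and time point $\tau$, $Q(D,\tau)$ is the set of tuples of objects $\vec o$ with $\Pi_Q\cup D\models P_Q(\vec o,\tau)$. A $\tau_{in}$-history is a dataset consisting of rigid facts and temporal facts with time argument $\le\tau_{in}$; a $\tau_{in}$-update is a dataset consisting of temporal facts with time argument $>\tau_{in}$. Definitive Time Point (DTP): an instance is $\langle Q,D,\tau_{in},\tau_{out}\rangle$ with $Q$ a temporal query, $D$ a $\tau_{in}$-history and $\tau_{out}\le\tau_{in}$; DTP holds for it iff $Q(D,\tau_{out})=Q(D\cup U,\tau_{out})$ for every $\tau_{in}$-update $U$. Critical domain: $C_I$ is the set of all objects occurring in $\Pi_Q\cup D$ together with one fresh object $o_I$. Predicate $P$ depends on $P'$ in $\Pi$ if some rule of $\Pi$ has $P$ in the head and $P'$ in the body; $\Pi$ (or a query with program $\Pi$) is nonrecursive if the graph of this dependency relation is acyclic. $\mathrm{rank}(P)=\mathrm{rank}(P,\Pi)$ is $0$ if $P$ does not occur in a rule head of $\Pi$, and otherwise the maximum of $\mathrm{rank}(P')+1$ over predicates $P'$ on which $P$ depends; $\mathrm{rank}(\Pi)$ is the maximum rank of a predicate of $\Pi$. A rule is connected if it contains at most one time variable and, if a time variable occurs in the body, it also occurs in the head; a query is connected if all its rules are. For a time term $s$, $\Delta(s)=k$ if $s=t+k$ with $t$ a variable, and $\Delta(s)=0$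 otherwise. The radius of a connected rule $r$ mentioning a time variable is the maximum of $|\Delta(s)-\Delta(s')|$ where $s$ is the time argument of the head and $s'$ the time argument of a body atom of $r$. The radius $\mathrm{rad}(\Pi)$ of a connected program is the number of rules of $\Pi$ times the maximum radius of a rule of $\Pi$; $\mathrm{rad}(Q)=\mathrm{rad}(\Pi_Q)$. Bounded critical update: let $\tau_0$ be the maximum of $\tau_{out}$ and the largest time point occurring in $\Pi_Q$; a time point $\tau$ is critical for $I$ if $\tau_{in}<\tau\le\tau_0+\mathrm{rad}(\Pi_Q)$; $B_I$ consists of all facts $P(\vec o,\tau)$ with $P$ a temporal EDB predicate of $\Pi_Q$, $\vec o$ a tuple over $C_I$ and $\tau$ critical. *)

From Stdlib Require Import ZArith List Relations.
Import ListNotations.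

Definition obj := nat.

Inductive oterm : Type :=
| OVar (x : nat)
| OConst (o : obj).

Inductive tterm : Type :=
| TConst (z : Z)
| TVar (t : nat)
| TPlus (t : nat) (k : Z).

(* Only rigid (all positions object sort) and temporal (last
   position time sort, others object sort) predicates can occur in atoms, so
   a predicate is given by a name, its EDB/IDB status, its number of object
   positions and whether it has a final time position (temporal). *)
Record pred : Type := mkPred {
  pname : nat;
  pidb : bool;
  pobjarity : nat;
  ptemporal : bool
}.

Definition pred_eq_dec (P Q : pred) : {P = Q} + {P <> Q}.
Proof. repeat decide equality. Defined.

Record atom : Type := mkAtom {
  apred : pred;
  aobjs : list oterm;
  atime : option tterm
}.

Definition wf_atom (a : atom) : Prop :=
  length (aobjs a) = pobjarity (apred a) /\
  (ptemporal (apred a) = true <-> atime a <> None).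

Definition rigid_atom (a : atom) : Prop := ptemporal (apred a) = false.

Record rule : Type := mkRule { rbody : list atom; rhead : atom }.

Definition rule_atoms (r : rule) : list atom := rhead r :: rbody r.

Definition tterm_vars (s : tterm) : list nat :=
  match s with TConst _ => [] | TVar t => [t] | TPlus t _ => [t] end.

Definition atom_tvars (a : atom) : list nat :=
  match atime a with Some s => tterm_vars s | None => [] end.

Definition atom_ovars (a : atom) : list nat :=
  flat_map (fun t => match t with OVar x => [x] | OConst _ => [] end) (aobjs a).

Definition atom_objs (a : atom) : list obj :=
  flat_map (fun t => match t with OVar _ => [] | OConst o => [o] end) (aobjs a).

Definition wf_rule (r : rule) : Prop :=
  Forall wf_atom (rule_atoms r) /\
  (rbody r <> [] -> pidb (apred (rhead r)) = true) /\
  (forall x, In x (atom_ovars (rhead r)) ->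
     exists b, In b (rbody r) /\ In x (atom_ovars b)) /\
  (forall t, In t (atom_tvars (rhead r)) ->
     exists b, In b (rbody r) /\ In t (atom_tvars b)).

Definition wf_program (Pi : list rule) : Prop := NoDup Pi /\ Forall wf_rule Pi.

Definition is_fact (a : atom) : Prop :=
  wf_atom a /\
  (forall t, In t (aobjs a) -> exists o, t = OConst o) /\
  (forall s, atime a = Some s -> exists z, s = TConst z).

Definition dataset (D : list atom) : Prop :=
  forall a, In a D -> is_fact a /\ pidb (apred a) = false.

Definition history (tin : Z) (D : list atom) : Prop :=
  dataset D /\
  forall a, In a D ->
    atime a = None \/ exists z, atime a = Some (TConst z) /\ (z <= tin)%Z.

Definition update (tin : Z) (U : list atom) : Prop :=
  dataset U /\
  forall a, In a U -> exists z, atime a = Some (TConst z) /\ (tin < z)%Z.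

Definition gatom (P : pred) (os : list obj) (tau : Z) : atom :=
  mkAtom P (map OConst os) (Some (TConst tau)).

Record structure : Type := mkStructure {
  Dom : Type;
  cst : obj -> Dom;
  rel : pred -> list Dom -> option Z -> Prop
}.

Definition eval_o (M : structure) (ov : nat -> Dom M) (t : oterm) : Dom M :=
  match t with OVar x => ov x | OConst o => cst M o end.

Definition eval_t (tv : nat -> Z) (s : tterm) : Z :=
  match s with TConst z => z | TVar t => tv t | TPlus t k => (tv t + k)%Z end.

Definition holds (M : structure) (ov : nat -> Dom M) (tv : nat -> Z) (a : atom) : Prop :=
  rel M (apred a) (map (eval_o M ov) (aobjs a)) (option_map (eval_t tv) (atime a)).

Definition satisfies_rule (M : structure) (r : rule) : Prop :=
  forall ov tv, (forall b, In b (rbody r) -> holds M ov tv b) -> holds M ov tv (rhead r).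

Definition is_model (M : structure) (S : rule -> Prop) : Prop :=
  forall r, S r -> satisfies_rule M r.

Definition entails (S : rule -> Prop) (a : atom) : Prop :=
  forall M, is_model M S -> forall ov tv, holds M ov tv a.

Definition fact_rule (a : atom) : rule := mkRule [] a.

Definition prog_set (Pi : list rule) : rule -> Prop := fun r => In r Pi.

Definition add_facts (S : rule -> Prop) (F : atom -> Prop) : rule -> Prop :=
  fun r => S r \/ exists a, F a /\ r = fact_rule a.

Definition in_list (l : list atom) : atom -> Prop := fun a => In a l.

Definition prog_preds (Pi : list rule) : list pred :=
  flat_map (fun r => map apred (rule_atoms r)) Pi.

Definition pred_of (Pi : list rule) (P : pred) : Prop := In P (prog_preds Pi).

Record query : Type := mkQuery { qpred : pred; qprog : list rule }.

Definition temporal_query (Q : query) : Prop :=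
  wf_program (qprog Q) /\ pred_of (qprog Q) (qpred Q) /\
  pidb (qpred Q) = true /\ ptemporal (qpred Q) = true.

Definition dtp_instance (Q : query) (D : list atom) (tin tout : Z) : Prop :=
  temporal_query Q /\ history tin D /\ (tout <= tin)%Z.

Definition depends (Pi : list rule) (P P' : pred) : Prop :=
  exists r, In r Pi /\ apred (rhead r) = P /\
    exists b, In b (rbody r) /\ apred b = P'.

Definition nonrecursive (Pi : list rule) : Prop :=
  forall P, ~ clos_trans pred (depends Pi) P P.

(* For a nonrecursive program every
   dependency chain has at most length Pi edges, so fuel (length Pi).+1 yields
   the rank defined in the paper. *)
Fixpoint rank_fuel (Pi : list rule) (n : nat) (P : pred) : nat :=
  match n with
  | O => O
  | S n' =>
      list_max (flat_map (fun r =>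
        if pred_eq_dec (apred (rhead r)) P
        then map (fun b => S (rank_fuel Pi n' (apred b))) (rbody r)
        else []) Pi)
  end.

Definition rank (Pi : list rule) (P : pred) : nat := rank_fuel Pi (S (length Pi)) P.

Definition prog_rank (Pi : list rule) : nat := list_max (map (rank Pi) (prog_preds Pi)).

Definition rule_tvars (r : rule) : list nat := flat_map atom_tvars (rule_atoms r).

Definition connected_rule (r : rule) : Prop :=
  (forall t t', In t (rule_tvars r) -> In t' (rule_tvars r) -> t = t') /\
  (forall t, In t (flat_map atom_tvars (rbody r)) -> In t (atom_tvars (rhead r))).

Definition connected_prog (Pi : list rule) : Prop := Forall connected_rule Pi.

Definition delta (s : tterm) : Z :=
  match s with TPlus _ k => k | _ => 0%Z end.

Definition atom_delta (a : atom) : Z :=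
  match atime a with Some s => delta s | None => 0%Z end.

(* Radius of a rule: max over body atoms of |Δ(head) - Δ(body atom)|.
   For a rule without time variables all Δ's are 0, so this is 0 and does
   not affect the maximum radius of a program. *)
Definition rule_radius (r : rule) : nat :=
  list_max (map (fun b => Z.abs_nat (atom_delta (rhead r) - atom_delta b)) (rbody r)).

Definition max_radius (Pi : list rule) : nat := list_max (map rule_radius Pi).

Definition rad (Pi : list rule) : nat := length Pi * max_radius Pi.

Definition atom_tpoints (a : atom) : list Z :=
  match atime a with Some (TConst z) => [z] | _ => [] end.

Definition prog_tpoints (Pi : list rule) : list Z :=
  flat_map (fun r => flat_map atom_tpoints (rule_atoms r)) Pi.

Definition prog_objs (Pi : list rule) : list obj :=
  flat_map (fun r => flat_map atom_objs (rule_atoms r)) Pi.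

Definition inst_objs (Pi : list rule) (D : list atom) : list obj :=
  prog_objs Pi ++ flat_map atom_objs D.

(* C_I, relative to the chosen fresh object oI *)
Definition in_CI (Pi : list rule) (D : list atom) (oI : obj) (o : obj) : Prop :=
  In o (inst_objs Pi D) \/ o = oI.

Definition tau0 (Pi : list rule) (tout : Z) : Z :=
  fold_right Z.max tout (prog_tpoints Pi).

Definition critical (Pi : list rule) (tin tout : Z) (tau : Z) : Prop :=
  (tin < tau /\ tau <= tau0 Pi tout + Z.of_nat (rad Pi))%Z.

Definition B_I (Pi : list rule) (D : list atom) (tin tout : Z) (oI : obj) : atom -> Prop :=
  fun a => exists P os tau,
    pred_of Pi P /\ ptemporal P = true /\ pidb P = false /\
    length os = pobjarity P /\ Forall (in_CI Pi D oI) os /\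
    critical Pi tin tout tau /\ a = gatom P os tau.

From Stdlib Require Import ZArith List Relations Lia.
Import ListNotations.

(* Restrict a model M of Π ∪ D ∪ U to the temporal facts that a derivation of
   P(o,τ) can consult: those reached from (P,τ) by walking backwards from rule
   heads to rule bodies, and make every other temporal fact true.  The restricted
   structure is still a model of Π (a reached head only consults reached body
   atoms) and of D, and the only update facts it needs are reached ones.  Along a
   walk of length k the time point moves by at most k·a from τ, or from a time
   point of Π reset by a constant body atom; and k ≤ rank(P), since walks follow
   dependencies.  With the bound on |τ - τ'| this keeps every reached time point
   below τ0 + rad(Π), so the reached update facts belong to B_I. *)

Lemma list_max_ge (l : list nat) x : In x l -> x <= list_max l.
Proof.
  intro Hx. pose proof (proj1 (list_max_le l (list_max l)) (le_n _)) as Hall.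
  rewrite Forall_forall in Hall. auto.
Qed.

Lemma list_max_eq0_or_In (l : list nat) : list_max l = 0 \/ In (list_max l) l.
Proof.
  induction l as [|x l IH]; simpl; auto.
  destruct (Nat.max_spec x (list_max l)) as [[_ ->]|[_ ->]]; [destruct IH|]; auto.
Qed.

Section DependencyPaths.
Variable Pi : list rule.

(* [dep_path Q R l]: [l] lists the predicates of a [depends]-path from [Q] to
   [R], the endpoint [R] excluded. *)
Inductive dep_path : pred -> pred -> list pred -> Prop :=
| dep_path_nil Q : dep_path Q Q []
| dep_path_cons Q Q' R l : depends Pi Q Q' -> dep_path Q' R l -> dep_path Q R (Q :: l).

Lemma dep_path_rcons Q R R' l :
  dep_path Q R l -> depends Pi R R' -> dep_path Q R' (l ++ [R]).
Proof.
  induction 1; intros; simpl; econstructor; eauto. constructor.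
Qed.

Lemma dep_path_reach Q R l x :
  dep_path Q R l -> In x l -> x = Q \/ clos_trans _ (depends Pi) Q x.
Proof.
  induction 1 as [|Q Q' R l Hdep _ IH]; simpl; [contradiction|].
  intros [<-|Hx]; auto.
  right. destruct (IH Hx) as [<-|Hc]; [apply t_step | eapply t_trans; [apply t_step|]]; eauto.
Qed.

Lemma dep_path_incl_heads Q R l :
  dep_path Q R l -> incl l (map (fun r => apred (rhead r)) Pi).
Proof.
  induction 1 as [|Q Q' R l [r [Hr [Hh _]]] _ IH]; intros x Hx; [contradiction|].
  destruct Hx as [<-|Hx]; auto.
  apply in_map_iff. eauto.
Qed.

Lemma rank_fuel_path n Q : exists R l, dep_path Q R l /\ length l = rank_fuel Pi n Q.
Proof.
  revert Q; induction n as [|n IH]; intro Q; [exists Q, []; split; [constructor|reflexivity]|].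
  simpl. match goal with |- context [list_max ?L] => destruct (list_max_eq0_or_In L) as [->|Hin] end.
  - exists Q, []. split; [constructor|reflexivity].
  - apply in_flat_map in Hin as [r [Hr Hin]].
    destruct (pred_eq_dec (apred (rhead r)) Q) as [Hh|]; [|contradiction].
    apply in_map_iff in Hin as [b [<- Hb]].
    destruct (IH (apred b)) as [R [l [Hl Hlen]]].
    exists R, (Q :: l). split; [|simpl; congruence].
    econstructor; [|exact Hl]. exists r. eauto.
Qed.

Lemma dep_path_length_le_rank_fuel Q R l n :
  dep_path Q R l -> length l <= n -> length l <= rank_fuel Pi n Q.
Proof.
  intro Hl; revert n; induction Hl as [|Q Q' R l [r [Hr [Hh [b [Hb Hbp]]]]] _ IH];
    intros [|n] Hn; simpl in *; try lia.
  eapply Nat.le_trans; [|apply list_max_ge, in_flat_map; exists r; split; [exact Hr|]].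
  2:{ destruct (pred_eq_dec (apred (rhead r)) Q); [|contradiction].
      apply in_map_iff. exists b. split; [reflexivity|exact Hb]. }
  subst. specialize (IH n). lia.
Qed.

Hypothesis Hnr : nonrecursive Pi.

Lemma dep_path_NoDup Q R l : dep_path Q R l -> NoDup l.
Proof.
  induction 1 as [|Q Q' R l Hdep Hl IH]; constructor; auto.
  intro Hin. apply (Hnr Q).
  destruct (dep_path_reach _ _ _ _ Hl Hin) as [<-|Hc];
    [apply t_step | eapply t_trans; [apply t_step|]]; eauto.
Qed.

Lemma dep_path_length_le Q R l : dep_path Q R l -> length l <= length Pi.
Proof.
  intro Hl. rewrite <- (length_map (fun r => apred (rhead r)) Pi).
  apply NoDup_incl_length; [eapply dep_path_NoDup | eapply dep_path_incl_heads]; eauto.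
Qed.

Lemma dep_path_length_le_rank Q R l : dep_path Q R l -> length l <= rank Pi Q.
Proof.
  intro Hl. apply (dep_path_length_le_rank_fuel Q R l); [exact Hl|].
  pose proof (dep_path_length_le _ _ _ Hl). lia.
Qed.

Lemma prog_rank_le_length : prog_rank Pi <= length Pi.
Proof.
  apply list_max_le, Forall_forall. intros x Hx.
  apply in_map_iff in Hx as [Q [<- _]].
  destruct (rank_fuel_path (S (length Pi)) Q) as [R [l [Hl Hlen]]].
  unfold rank. rewrite <- Hlen. eapply dep_path_length_le; eauto.
Qed.

End DependencyPaths.

Lemma eval_t_delta tv s x : In x (tterm_vars s) -> eval_t tv s = (tv x + delta s)%Z.
Proof. destruct s; simpl; intros [<-|[]] || contradiction; lia. Qed.

Lemma body_delta_le_max_radius Pi r b :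
  In r Pi -> In b (rbody r) ->
  Z.abs_nat (atom_delta (rhead r) - atom_delta b) <= max_radius Pi.
Proof.
  intros Hr Hb. apply (Nat.le_trans _ (rule_radius r)); apply list_max_ge.
  - apply (in_map (fun b => Z.abs_nat (atom_delta (rhead r) - atom_delta b))), Hb.
  - apply in_map, Hr.
Qed.

Lemma body_const_time_in_prog_tpoints Pi r b z :
  In r Pi -> In b (rbody r) -> atime b = Some (TConst z) -> In z (prog_tpoints Pi).
Proof.
  intros Hr Hb Hz. apply in_flat_map. exists r. split; [exact Hr|].
  apply in_flat_map. exists b. split; [now right|]. unfold atom_tpoints. now rewrite Hz; left.
Qed.

Lemma body_time_var_in_head r b s sb x :
  connected_rule r -> In b (rbody r) ->
  atime (rhead r) = Some s -> atime b = Some sb ->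
  In x (tterm_vars sb) -> In x (tterm_vars s).
Proof.
  intros [_ Hhead] Hb Hs Hsb Hx. specialize (Hhead x).
  unfold atom_tvars in Hhead. rewrite Hs in Hhead. apply Hhead, in_flat_map.
  exists b. unfold atom_tvars. rewrite Hsb. auto.
Qed.

Lemma body_time_near_head Pi r b s sb x tv :
  connected_prog Pi -> In r Pi -> In b (rbody r) ->
  atime (rhead r) = Some s -> atime b = Some sb -> In x (tterm_vars sb) ->
  (Z.abs (eval_t tv sb - eval_t tv s) <= Z.of_nat (max_radius Pi))%Z.
Proof.
  intros Hconn Hr Hb Hs Hsb Hx.
  pose proof (body_time_var_in_head r b s sb x
                (proj1 (Forall_forall _ _) Hconn r Hr) Hb Hs Hsb Hx) as Hxh.
  pose proof (body_delta_le_max_radius Pi r b Hr Hb) as Hrad.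
  unfold atom_delta in Hrad. rewrite Hs, Hsb in Hrad.
  rewrite (eval_t_delta tv s x Hxh), (eval_t_delta tv sb x Hx). lia.
Qed.

Lemma tau0_ge Pi tout c : c = tout \/ In c (prog_tpoints Pi) -> (c <= tau0 Pi tout)%Z.
Proof.
  unfold tau0. induction (prog_tpoints Pi) as [|z l IH]; simpl.
  - intros [->|[]]. lia.
  - intros [->|[->|Hc]]; [specialize (IH (or_introl eq_refl)) | | specialize (IH (or_intror Hc))];
      lia.
Qed.

Section BackwardWalk.
Variables (Pi : list rule) (P : pred) (tau : Z).

(* [reach k Q t]: the temporal fact of [Q] at [t] is consulted, after [k] rule
   applications read backwards, by a derivation of [P] at [tau]. *)
Inductive reach : nat -> pred -> Z -> Prop :=
| reach_start : reach 0 P tau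
| reach_body k r tv b s sb :
    reach k (apred (rhead r)) (eval_t tv s) ->
    In r Pi -> In b (rbody r) -> atime (rhead r) = Some s -> atime b = Some sb ->
    reach (S k) (apred b) (eval_t tv sb).

Lemma reach_path k Q t : reach k Q t -> exists l, dep_path Pi P Q l /\ length l = k.
Proof.
  induction 1 as [|k r tv b s sb _ [l [Hl Hlen]] Hr Hb _ _].
  - exists []. split; [constructor|reflexivity].
  - exists (l ++ [apred (rhead r)]). split.
    + apply dep_path_rcons; [exact Hl|]. exists r. eauto.
    + rewrite length_app; simpl; lia.
Qed.

Lemma reach_pred_of k Q t : reach k Q t -> Q = P \/ pred_of Pi Q.
Proof.
  destruct 1 as [|k r tv b s sb _ Hr Hb _ _]; [now left|right].
  apply in_flat_map. exists r. split; [exact Hr|]. apply in_map. now right.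
Qed.

Hypothesis Hconn : connected_prog Pi.

Lemma reach_time k Q t : reach k Q t ->
  exists c, (c = tau \/ In c (prog_tpoints Pi)) /\
            (Z.abs (t - c) <= Z.of_nat k * Z.of_nat (max_radius Pi))%Z.
Proof.
  induction 1 as [|k r tv b s sb _ [c [Hc Hdist]] Hr Hb Hs Hsb].
  - exists tau. split; [now left|lia].
  - rewrite Nat2Z.inj_succ.
    destruct sb as [z|x|x d];
      [ exists z; split; [right; eapply body_const_time_in_prog_tpoints; eauto|];
        simpl; rewrite Z.sub_diag; lia
      | exists c; split; [exact Hc|];
        pose proof (body_time_near_head Pi r b s _ x tv Hconn Hr Hb Hs Hsb (or_introl eq_refl));
        lia .. ].
Qed.

Hypothesis Hnr : nonrecursive Pi.

Lemma reach_le_horizon tout k Q t :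
  (exists tau', (tau' = tout \/ In tau' (prog_tpoints Pi)) /\
     (Z.abs (tau - tau') <=
        Z.of_nat (max_radius Pi) * (Z.of_nat (prog_rank Pi) - Z.of_nat (rank Pi P)))%Z) ->
  reach k Q t -> (t <= tau0 Pi tout + Z.of_nat (rad Pi))%Z.
Proof.
  intros [tau' [Htau' Hdist]] Hreach.
  destruct (reach_path _ _ _ Hreach) as [l [Hl <-]].
  pose proof (dep_path_length_le Pi Hnr _ _ _ Hl) as Hlen.
  pose proof (dep_path_length_le_rank Pi Hnr _ _ _ Hl) as Hrank.
  pose proof (prog_rank_le_length Pi Hnr) as Hprog.
  pose proof (tau0_ge Pi tout tau' Htau').
  destruct (reach_time _ _ _ Hreach) as [c [[->|Hc] Ht]]; unfold rad; rewrite Nat2Z.inj_mul.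
  - nia.
  - pose proof (tau0_ge Pi tout c (or_intror Hc)). nia.
Qed.

End BackwardWalk.

Definition restrict (M : structure) (X : pred -> Z -> Prop) : structure :=
  mkStructure (Dom M) (cst M) (fun Q args ot =>
    match ot with
    | None => rel M Q args None
    | Some t => X Q t -> rel M Q args (Some t)
    end).

Lemma restrict_fact M X a :
  satisfies_rule M (fact_rule a) -> satisfies_rule (restrict M X) (fact_rule a).
Proof.
  intros Ha ov tv _. specialize (Ha ov tv (fun _ H => match H with end)).
  unfold holds in *; simpl in *. destruct (option_map (eval_t tv) (atime a)); auto.
Qed.

Lemma restrict_temporal_fact M X a z :
  atime a = Some (TConst z) -> (X (apred a) z -> satisfies_rule M (fact_rule a)) ->
  satisfies_rule (restrict M X) (fact_rule a).
Proof.
  intros Hz Ha ov tv _. unfold holds; simpl. rewrite Hz. intro HX.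
  specialize (Ha HX ov tv (fun _ H => match H with end)).
  unfold holds in Ha; simpl in Ha. rewrite Hz in Ha. exact Ha.
Qed.

Lemma restrict_rule M X r :
  (forall a, In a (rule_atoms r) -> atime a <> None) ->
  (forall tv s b sb, atime (rhead r) = Some s -> In b (rbody r) -> atime b = Some sb ->
     X (apred (rhead r)) (eval_t tv s) -> X (apred b) (eval_t tv sb)) ->
  satisfies_rule M r -> satisfies_rule (restrict M X) r.
Proof.
  intros Htemp Hclosed Hr ov tv Hbody.
  destruct (atime (rhead r)) as [s|] eqn:Hs; [|now destruct (Htemp _ (or_introl eq_refl))].
  unfold holds. rewrite Hs. intro HX.
  specialize (Hr ov tv). unfold holds in Hr. rewrite Hs in Hr. apply Hr.
  intros b Hb. specialize (Hbody b Hb). unfold holds in Hbody |- *.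
  destruct (atime b) as [sb|] eqn:Hsb; [|now destruct (Htemp _ (or_intror Hb))].
  apply Hbody. eapply Hclosed; eauto.
Qed.

Lemma nonrigid_atom_time a : wf_atom a -> ~ rigid_atom a -> atime a <> None.
Proof.
  intros [_ Hiff] Hnr. apply Hiff. unfold rigid_atom in Hnr.
  destruct (ptemporal (apred a)); congruence.
Qed.

Lemma ground_objs (l : list oterm) :
  (forall t, In t l -> exists o, t = OConst o) -> exists os, l = map OConst os.
Proof.
  induction l as [|t l IH]; intro H; [now exists []|].
  destruct (H t (or_introl eq_refl)) as [o ->].
  destruct IH as [os ->]; [auto with datatypes|]. now exists (o :: os).
Qed.

Lemma atom_objs_map_OConst a os : aobjs a = map OConst os -> atom_objs a = os.
Proof.
  unfold atom_objs. intros ->. induction os; simpl; congruence.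
Qed.

Lemma update_fact_in_B_I Pi D tin tout oI U a z :
  update tin U ->
  (forall a o, In a U -> In o (atom_objs a) -> in_CI Pi D oI o) ->
  In a U -> atime a = Some (TConst z) -> pred_of Pi (apred a) ->
  (z <= tau0 Pi tout + Z.of_nat (rad Pi))%Z ->
  B_I Pi D tin tout oI a.
Proof.
  intros [Hds Htimes] HUobj Ha Hz Hpred Hhorizon.
  destruct (Htimes a Ha) as [z' [Hz' Hlt]]. rewrite Hz in Hz'. injection Hz' as <-.
  destruct (Hds a Ha) as [[[Hlen Hiff] [Hground _]] Hedb].
  destruct (ground_objs _ Hground) as [os Hos].
  exists (apred a), os, z. repeat split; auto.
  - apply Hiff. congruence.
  - rewrite Hos, length_map in Hlen. exact Hlen.
  - apply Forall_forall. intros o Ho. apply (HUobj a o Ha).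
    now rewrite (atom_objs_map_OConst a os Hos).
  - destruct a as [p objs t]; simpl in *; subst; reflexivity.
Qed.

Theorem lemma4 (Q : query) (D : list atom) (tin tout : Z)
  (HI : dtp_instance Q D tin tout)
  (Hnr : nonrecursive (qprog Q))
  (Hconn : connected_prog (qprog Q))
  (Hnorigid : forall r a, In r (qprog Q) -> In a (rule_atoms r) -> ~ rigid_atom a)
  (oI : obj) (HoI : ~ In oI (inst_objs (qprog Q) D))
  (U : list atom) (HU : update tin U)
  (HUobj : forall a o, In a U -> In o (atom_objs a) -> in_CI (qprog Q) D oI o)
  (P : pred) (os : list obj) (tau : Z)
  (HP : pred_of (qprog Q) P)
  (Hatom : wf_atom (gatom P os tau))
  (Hent : entails (add_facts (add_facts (prog_set (qprog Q)) (in_list D)) (in_list U))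
                  (gatom P os tau))
  (Htau : exists tau', (tau' = tout \/ In tau' (prog_tpoints (qprog Q))) /\
      (Z.abs (tau - tau') <=
         Z.of_nat (max_radius (qprog Q)) *
         (Z.of_nat (prog_rank (qprog Q)) - Z.of_nat (rank (qprog Q) P)))%Z) :
  entails (add_facts (add_facts (prog_set (qprog Q)) (in_list D))
                     (B_I (qprog Q) D tin tout oI))
          (gatom P os tau).
Proof.
  set (Pi := qprog Q) in *.
  destruct HI as [[[_ Hwf] _] _].
  intros M HM ov tv.
  set (X := fun Q t => exists k, reach Pi P tau k Q t).
  assert (HMX : is_model (restrict M X)
                  (add_facts (add_facts (prog_set Pi) (in_list D)) (in_list U))).
  { intros r [[Hr|[a [Ha ->]]]|[a [Ha ->]]].
    - apply restrict_rule; [|intros ? ? ? ? ? ? ? [k Hk]; exists (S k); econstructor; eauto|].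
      + intros a Ha. apply nonrigid_atom_time; [|eauto].
        destruct (proj1 (Forall_forall _ _) Hwf r Hr) as [Hatoms _].
        exact (proj1 (Forall_forall _ _) Hatoms a Ha).
      + apply HM. left. now left.
    - apply restrict_fact, HM. left. right. eauto.
    - destruct (proj2 HU a Ha) as [z [Hz _]].
      apply (restrict_temporal_fact M X a z Hz). intros [k Hk].
      apply HM. right. exists a. split; [|reflexivity].
      eapply update_fact_in_B_I; eauto.
      + destruct (reach_pred_of Pi P tau _ _ _ Hk) as [->|]; auto.
      + eapply reach_le_horizon; eauto. }
  apply (Hent _ HMX ov tv). now exists 0; constructor.
Qed.
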